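(* Let $n\ge 0$, let $a_{n,0},\dots,a_{n,n}\in\mathbb C$, and let $P_n$ be the polynomial associated to $\{a_{n,k}\}_{k=0}^n$, i.e. $\sum_{k=0}^n a_{n,k}q^kp^nq^{n-k}=P_n(z)$ in $\mathcal A$. Then for $0\le k\le n$, $$a_{n,k}=\frac{1}{\imath^{n}n!}\sum_{j=0}^{n-k}(-1)^{n-k-j}\binom{n+1}{n-k-j}P_n\!\left(\imath\left(j+\tfrac12\right)\right).$$ Equivalently, writing $P_n(z)=\sum_{r=0}^n b_{n,r}z^r$, $$a_{n,k}=\frac{1}{\imath^{n}n!}\sum_{j=0}^{n-k}(-1)^{n-k-j}\binom{n+1}{n-k-j}\sum_{r=0}^{n}b_{n,r}\,\imath^{r}\left(j+\tfrac12\right)^{r}.$$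
   Context: $\imath=\sqrt{-1}$. $\mathcal{A}$ denotes the quotient of the free associative $\mathbb{C}$-algebra on two noncommuting generators $p,q$ by the two-sided ideal generated by $qp-pq-\imath$, and $z=\tfrac12(qp+pq)\in\mathcal A$. For $n\ge0$ and complex numbers $a_{n,0},\dots,a_{n,n}$, there is a unique polynomial $P_n\in\mathbb{C}[X]$ of degree at most $n$ with $\sum_{k=0}^n a_{n,k}q^kp^nq^{n-k}=P_n(z)$ in $\mathcal A$; it is called the polynomial associated to $\{a_{n,k}\}$. *)

From HB Require Import structures.
From mathcomp Require Import all_boot all_order all_algebra.
Set Implicit Arguments. Unset Strict Implicit. Unset Printing Implicit Defensive.
Import Order.TTheory GRing.Theory Num.Theory.
Local Open Scope ring_scope.

Definition weyl_z (C : fieldType) (B : algType C) (p q : B) : B :=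
  (2%:R : C)^-1 *: (q * p + p * q).

Definition weyl_rel (C : numClosedFieldType) (B : algType C) (p q : B) : Prop :=
  q * p - p * q = 'i%:A.

(* A is the quotient
   of the free algebra by qp - pq - i; an identity between (images of)
   noncommutative polynomials in p, q holds in A iff it holds for every
   C-algebra B and every p, q in B satisfying the relation (universal
   property of the quotient; A itself is such a B). *)
Definition holds_in_weyl (C : numClosedFieldType) (n : nat) (a : nat -> C)
    (P : {poly C}) : Prop :=
  forall (B : algType C) (p q : B), weyl_rel p q ->
    \sum_(k < n.+1) a k *: (q ^+ k * p ^+ n * q ^+ (n - k))
    = \sum_(r < size P) P`_r *: (weyl_z p q) ^+ r.

Definition associated_poly (C : numClosedFieldType) (n : nat) (a : nat -> C)
    (P : {poly C}) : Prop :=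
  (size P <= n.+1)%N /\ holds_in_weyl n a P.

From HB Require Import structures.
From mathcomp Require Import all_boot all_order all_algebra zify ring.
From mathcomp Require Import boolp functions.
Import Order.TTheory GRing.Theory Num.Theory.
Local Open Scope ring_scope.

(* Represent the Weyl relation on C[X] by q = d/dX and p = 'i X.  Then z and
   every word q^k p^n q^(n-k) act diagonally on the monomials: X^m is an
   eigenvector with eigenvalues 'i (m + 1/2) and 'i^n (m+k)^_n respectively.
   The defining identity of P thus yields, for every m,
     P('i (m + 1/2)) = 'i^n \sum_k a_k (m+k)^_n,
   and these equations are inverted by the finite-difference identity
     \sum_j (-1)^(n-k-j) 'C(n+1, n-k-j) (j+l)^_n = n! [l == k]. *)

(* A linear endomorphism A of R[X], recorded by the images A j of 'X^j. *)
Definition polyEnd (R : comNzRingType) : Type := nat -> {poly R}.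
HB.instance Definition _ (R : comNzRingType) := GRing.Lmodule.on (polyEnd R).

Section PolyEndAction.
Variable R : comNzRingType.
Implicit Types (A B D : polyEnd R) (v : {poly R}).

Definition act A v : {poly R} := \sum_(r < size v) v`_r *: A r.

Lemma act_widen A v N : (size v <= N)%N -> act A v = \sum_(r < N) v`_r *: A r.
Proof.
move=> vN; rewrite /act (big_ord_widen N (fun r => v`_r *: A r) vN) big_mkcond.
apply: eq_bigr => r _; case: ifPn => //; rewrite -leqNgt => vr.
by rewrite nth_default ?scale0r.
Qed.

Fact act_is_linear A : linear (act A).
Proof.
move=> c u v; pose N := maxn (size u) (size v).
have uN : (size u <= N)%N := leq_maxl _ _.
have vN : (size v <= N)%N := leq_maxr _ _.
have cuvN : (size (c *: u + v)%R <= N)%N.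
  by rewrite (leq_trans (size_polyD _ _)) // geq_max (leq_trans (size_scale_leq _ _)).
rewrite (act_widen A _ _ uN) (act_widen A _ _ vN) (act_widen A _ _ cuvN).
under eq_bigr => r _ do rewrite coefD coefZ scalerDl -scalerA.
by rewrite big_split scaler_sumr.
Qed.

HB.instance Definition _ A :=
  GRing.isLinear.Build R {poly R} {poly R} *:%R (act A) (act_is_linear A).

Lemma actXn A j : act A 'X^j = A j.
Proof.
rewrite /act size_polyXn big_ord_recr /= big1 => [|r _].
  by rewrite coefXn eqxx scale1r add0r.
by rewrite coefXn ltn_eqF ?scale0r.
Qed.

Lemma actD A B v : act (A + B) v = act A v + act B v.
Proof. by rewrite /act -big_split; apply: eq_bigr => r _; rewrite scalerDr. Qed.

Lemma actZ c A v : act (c *: A) v = c *: act A v.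
Proof.
by rewrite /act scaler_sumr; apply: eq_bigr => r _; rewrite !scalerA mulrC.
Qed.

Lemma linear_polyXn_eq (f g : {linear {poly R} -> {poly R}}) :
  (forall j, f 'X^j = g 'X^j) -> f =1 g.
Proof.
move=> fg v; rewrite -[v]coefK poly_def !linear_sum.
by apply: eq_bigr => r _; rewrite !linearZ fg.
Qed.

Definition endo_of (f : {poly R} -> {poly R}) : polyEnd R := fun j => f 'X^j.

Lemma act_endo_of (f : {linear {poly R} -> {poly R}}) : act (endo_of f) =1 f.
Proof. by apply: linear_polyXn_eq => j /=; rewrite actXn. Qed.

Definition polyEnd_one : polyEnd R := endo_of idfun.
Definition polyEnd_mul A B : polyEnd R := fun j => act A (B j).

Lemma act_mul A B v : act (polyEnd_mul A B) v = act A (act B v).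
Proof. by apply: (linear_polyXn_eq (act _) (act A \o act B)) => j /=; rewrite !actXn. Qed.

Lemma polyEnd_mulA : associative polyEnd_mul.
Proof. by move=> A B D; apply: funext => j; rewrite /polyEnd_mul act_mul. Qed.

Lemma polyEnd_mul1 : left_id polyEnd_one polyEnd_mul.
Proof. by move=> A; apply: funext => j; rewrite /polyEnd_mul act_endo_of. Qed.

Lemma polyEnd_mulr1 : right_id polyEnd_one polyEnd_mul.
Proof. by move=> A; apply: funext => j; rewrite /polyEnd_mul actXn. Qed.

Lemma polyEnd_mulDl : left_distributive polyEnd_mul +%R.
Proof. by move=> A B D; apply: funext => j; rewrite /polyEnd_mul actD. Qed.

Lemma polyEnd_mulDr : right_distributive polyEnd_mul +%R.
Proof. by move=> A B D; apply: funext => j; rewrite /polyEnd_mul /= linearD. Qed.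

Lemma polyEnd_one_neq0 : polyEnd_one != 0.
Proof. by apply/eqP => /(congr1 (@^~ 0%N)) /eqP; rewrite oner_eq0. Qed.

End PolyEndAction.
Arguments act {R}.
Arguments endo_of {R}.

HB.instance Definition _ (R : comNzRingType) :=
  GRing.Zmodule_isNzRing.Build (polyEnd R) (@polyEnd_mulA R) (@polyEnd_mul1 R)
    (@polyEnd_mulr1 R) (@polyEnd_mulDl R) (@polyEnd_mulDr R) (@polyEnd_one_neq0 R).

Lemma polyEnd_mulE (R : comNzRingType) (A B : polyEnd R) j :
  (A * B) j = act A (B j).
Proof. by []. Qed.

Lemma polyEnd_scalerAl (R : comNzRingType) (c : R) (A B : polyEnd R) :
  c *: (A * B) = (c *: A) * B.
Proof. by apply: funext => j; rewrite polyEnd_mulE actZ. Qed.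

HB.instance Definition _ (R : comNzRingType) :=
  GRing.Lmodule_isLalgebra.Build R (polyEnd R) (@polyEnd_scalerAl R).

Lemma polyEnd_scalerAr (R : comNzRingType) (c : R) (A B : polyEnd R) :
  c *: (A * B) = A * (c *: B).
Proof. by apply: funext => j; rewrite !polyEnd_mulE linearZ. Qed.

HB.instance Definition _ (R : comNzRingType) :=
  GRing.Lalgebra_isAlgebra.Build R (polyEnd R) (@polyEnd_scalerAr R).

Section PolyEndCalculus.
Variable R : comNzRingType.
Implicit Types (A : polyEnd R) (d e : nat -> R^o).

Lemma act_exp A n v : act (A ^+ n) v = iter n (act A) v.
Proof.
elim: n => [|n IHn] /=; first by rewrite expr0 act_endo_of.
by rewrite exprS act_mul IHn.
Qed.

Definition diag_end d : polyEnd R := fun j => d j *: 'X^j.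

Fact diag_end_is_linear : linear diag_end.
Proof. by move=> c d e; apply: funext => j; rewrite /diag_end !fctE /= scalerDl scalerA. Qed.

HB.instance Definition _ :=
  GRing.isLinear.Build R (nat -> R^o) (polyEnd R) *:%R diag_end diag_end_is_linear.

Fact diag_end_is_monoid_morphism : monoid_morphism diag_end.
Proof.
split; first by apply: funext => j; rewrite /diag_end scale1r.
move=> d e; apply: funext => j.
by rewrite polyEnd_mulE /diag_end linearZ /= actXn scalerA mulrC.
Qed.

HB.instance Definition _ :=
  GRing.isMonoidMorphism.Build (nat -> R^o) (polyEnd R) diag_end
    diag_end_is_monoid_morphism.

Lemma diag_end_inj : injective diag_end.
Proof.
move=> d e /= de; apply: funext => j.
by have := congr1 (fun A : polyEnd R => (A j)`_j) de; rewrite /= !coefZ coefXn eqxx !mulr1.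
Qed.

End PolyEndCalculus.
Arguments diag_end {R}.

Lemma ffactD x a b : (x ^_ (a + b) = x ^_ a * (x - a) ^_ b)%N.
Proof.
elim: b => [|b IHb]; first by rewrite addn0 ffactn0 muln1.
by rewrite addnS !ffactnSr IHb -mulnA subnDA.
Qed.

Section WeylRepresentation.
Variable C : numClosedFieldType.

Definition weyl_q : polyEnd C := endo_of deriv.
Definition weyl_p : polyEnd C := 'i *: endo_of ('X \o* idfun).

Lemma act_weyl_q v : act weyl_q v = v^`().
Proof. by rewrite act_endo_of. Qed.

Lemma act_weyl_p v : act weyl_p v = 'i *: (v * 'X).
Proof. by rewrite actZ act_endo_of. Qed.

Lemma weyl_p_monomial j : weyl_p j = 'i *: 'X^(j.+1).
Proof. by rewrite -actXn act_weyl_p exprSr. Qed.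

Lemma weyl_qp : weyl_q * weyl_p = diag_end (fun j => 'i * j.+1%:R).
Proof.
apply: funext => j; rewrite polyEnd_mulE act_weyl_q weyl_p_monomial /diag_end.
by rewrite derivZ derivXn /= -scaler_nat scalerA.
Qed.

Lemma weyl_pq : weyl_p * weyl_q = diag_end (fun j => 'i * j%:R).
Proof.
apply: funext => j; rewrite polyEnd_mulE act_weyl_p -actXn act_weyl_q /diag_end.
case: j => [|j]; first by rewrite derivXn mulr0n mul0r scaler0 mulr0 scale0r.
by rewrite derivXn /= -scaler_nat -scalerAl -exprSr scalerA.
Qed.

Lemma weyl_rel_pq : weyl_rel weyl_p weyl_q.
Proof.
rewrite /weyl_rel weyl_qp weyl_pq -linearB.
transitivity (diag_end (fun=> 'i : C^o)); last by apply: funext.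
by congr diag_end; apply: funext => j; rewrite !fctE /= -mulrBr -natrB // subSnn mulr1.
Qed.

Lemma weyl_z_pq : weyl_z weyl_p weyl_q = diag_end (fun j => 'i * (j%:R + 2%:R^-1)).
Proof.
rewrite /weyl_z weyl_qp weyl_pq -linearD -linearZ /=.
congr diag_end; apply: funext => j; rewrite !fctE /=.
have two_neq0 : (2%:R : C) != 0 by rewrite pnatr_eq0.
(* the goal is stated in C^o, on which [field] does not find a field structure *)
suff half_sum : 2^-1 * ('i * j.+1%:R + 'i * j%:R) = 'i * (j%:R + 2^-1) :> C by [].
by rewrite -natr1; field.
Qed.

Lemma iter_act_weyl_q k v : iter k (act weyl_q) v = v^`(k).
Proof. by elim: k => //= k IHk; rewrite IHk act_weyl_q -derivnS. Qed.

Lemma iter_act_weyl_p n v : iter n (act weyl_p) v = 'i ^+ n *: (v * 'X^n).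
Proof.
elim: n => [|n IHn] /=; first by rewrite expr0 mulr1 scale1r.
by rewrite IHn act_weyl_p -scalerAl scalerA -mulrA -exprSr -exprS.
Qed.

Lemma weyl_normal_word n k : (k <= n)%N ->
  weyl_q ^+ k * weyl_p ^+ n * weyl_q ^+ (n - k)
  = diag_end (fun j => 'i ^+ n * ((j + k) ^_ n)%:R).
Proof.
move=> kn; apply: funext => j; rewrite -actXn !act_mul !act_exp.
rewrite iter_act_weyl_q iter_act_weyl_p iter_act_weyl_q derivnXn.
rewrite mulrnAl -exprD derivnZ derivnMn derivnXn -mulrnA -scaler_nat scalerA.
rewrite /diag_end; case: (leqP (n - k) j) => [nkj | jnk].
  have -> : (j - (n - k) + n - k = j)%N by lia.
  have -> : (j - (n - k) + n = j + k)%N by lia.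
  suff -> : ((j + k) ^_ n = (j + k) ^_ k * j ^_ (n - k))%N by [].
  by rewrite -{1}(subnKC kn) ffactD addnK.
by rewrite (ffact_small jnk) (@ffact_small (j + k)) ?muln0 ?mulr0 ?scale0r //; lia.
Qed.

Lemma weyl_diagonal_identity n (a : nat -> C) (P : {poly C}) :
  holds_in_weyl n a P -> forall m : nat,
  P.['i * (m%:R + 2%:R^-1)] = 'i ^+ n * \sum_(k < n.+1) a k * ((m + k) ^_ n)%:R.
Proof.
move=> hP m; have := hP _ _ _ weyl_rel_pq.
under eq_bigr => k _ do rewrite (@weyl_normal_word n k (ltn_ord k)) -linearZ.
under [in RHS]eq_bigr => r _ do rewrite weyl_z_pq -rmorphXn -linearZ.
rewrite -!linear_sum => /diag_end_inj/(congr1 (@^~ m)).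
rewrite !fct_sumE /= => sums_eq.
rewrite horner_coef mulr_sumr.
transitivity (\sum_(r < size P) (P`_r *: (fun j : nat => 'i * (j%:R + 2^-1) : C^o) ^+ r) m).
  by apply: eq_bigr => r _; rewrite exprfctE.
by rewrite -sums_eq; apply: eq_bigr => k _; rewrite mulrCA.
Qed.
End WeylRepresentation.

Section AlternatingBinomialSums.
Variable R : pzRingType.

Definition alt_binom_conv N n m : R :=
  \sum_(t < m.+1) (-1) ^+ t * ('C(N, t) * 'C(m - t, n))%:R.

Lemma alt_binom_conv_small N n m : (m < n)%N -> alt_binom_conv N n m = 0.
Proof.
move=> mn; rewrite /alt_binom_conv big1 // => t _.
by rewrite (@bin_small (m - t)) ?muln0 ?mulr0 //; lia.
Qed.

Lemma alt_binom_conv0 n m : alt_binom_conv 0 n m = 'C(m, n)%:R.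
Proof.
rewrite /alt_binom_conv big_ord_recl big1 => [|t _].
  by rewrite expr0 mul1r bin0 mul1n subn0 addr0.
by rewrite bin0n mul0n mulr0.
Qed.

Lemma alt_binom_convSS N n m :
  alt_binom_conv N.+1 n m.+1 = alt_binom_conv N n m.+1 - alt_binom_conv N n m.
Proof.
rewrite /alt_binom_conv big_ord_recl [in X in _ = X - _]big_ord_recl /=.
rewrite !bin0 !subn0 !expr0 !mul1r.
under eq_bigr => t _ do
  rewrite /bump /= add1n subSS binS mulnDl natrD mulrDr exprS mulN1r.
rewrite big_split /= addrA -sumrN; congr (_ + _).
  by under [in RHS]eq_bigr => t _ do rewrite /bump /= add1n subSS exprS mulN1r.
by apply: eq_bigr => t _; rewrite mulNr.
Qed.

Lemma alt_binom_conv_le N n m : (N <= n)%N -> (n <= m)%N ->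
  alt_binom_conv N n m = 'C(m - N, n - N)%:R.
Proof.
elim: N m => [|N IHN] m Nn nm; first by rewrite alt_binom_conv0 !subn0.
case: m nm => [|m] nm; first lia.
rewrite alt_binom_convSS IHN; try lia.
case: (ltnP m n) => mn.
  have -> : n = m.+1 by lia.
  by rewrite alt_binom_conv_small // subr0 !binn.
rewrite IHN; try lia.
have -> : (m.+1 - N = (m - N).+1)%N by lia.
have -> : (n - N = (n - N.+1).+1)%N by lia.
by rewrite binS natrD addrAC subrr add0r subSS.
Qed.

Lemma alt_binom_conv_top n m : alt_binom_conv n.+1 n m = (m == n)%:R.
Proof.
case: (ltnP m n) => mn; first by rewrite alt_binom_conv_small // ltn_eqF.
case: m mn => [|m] mn.
  have -> : n = 0%N by lia.
  by rewrite /alt_binom_conv big_ord1 expr0 mul1r.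
rewrite alt_binom_convSS; case: (ltnP m n) => mn'.
  have -> : n = m.+1 by lia.
  by rewrite (@alt_binom_conv_small _ _ m) // subr0 alt_binom_conv_le // !subnn bin0 eqxx.
rewrite !alt_binom_conv_le // !subnn !bin0 subrr.
by have -> : (m.+1 == n) = false by apply/negbTE; lia.
Qed.

End AlternatingBinomialSums.

Lemma alt_binom_ffact_sum (R : comPzRingType) n k l : (k <= n)%N -> (l <= n)%N ->
  \sum_(j < (n - k).+1) (-1) ^+ (n - k - j) * 'C(n.+1, n - k - j)%:R
     * ((j + l) ^_ n)%:R = (n`! * (l == k))%:R :> R.
Proof.
move=> kn ln; rewrite (reindex_inj rev_ord_inj) /=.
under eq_bigr => t _.
  have tnk : (t <= n - k)%N by rewrite -ltnS.
  rewrite subSS (subKn tnk) -bin_ffact natrM.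
  have -> : (n - k - t + l = n - k + l - t)%N by lia.
  rewrite mulrA -(mulrA _ 'C(n.+1, t)%:R) -natrM.
  over.
rewrite -mulr_suml.
transitivity (alt_binom_conv R n.+1 n (n - k + l) * n`!%:R); last first.
  rewrite alt_binom_conv_top -natrM mulnC; congr (_ * _)%:R.
  by apply/eqP; case: eqP; case: eqP; lia.
congr (_ * _); rewrite /alt_binom_conv.
rewrite (big_ord_widen (n - k + l).+1
  (fun t => (-1) ^+ t * ('C(n.+1, t) * 'C(n - k + l - t, n))%:R)) ?ltnS ?leq_addr //.
rewrite big_mkcond; apply: eq_bigr => t _ /=; case: ifPn => // /negbTE tnk.
by rewrite (@bin_small (n - k + l - t)) ?muln0 ?mulr0 //; move: tnk (ltn_ord t); lia.
Qed.

Lemma ffact_transform_inversion (R : comPzRingType) n k (b : nat -> R) :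
  (k <= n)%N ->
  \sum_(j < (n - k).+1) (-1) ^+ (n - k - j) * 'C(n.+1, n - k - j)%:R
     * \sum_(l < n.+1) b l * ((j + l) ^_ n)%:R = n`!%:R * b k.
Proof.
move=> kn; under eq_bigr => j _ do rewrite mulr_sumr.
rewrite exchange_big /=.
under eq_bigr => l _ do under eq_bigr => j _ do rewrite mulrCA.
under eq_bigr => l _ do rewrite -mulr_sumr (@alt_binom_ffact_sum R n k l kn (ltn_ord l)).
rewrite (bigD1 (Ordinal (kn : (k < n.+1)%N))) //= big1 => [|l /negbTE lk].
  by rewrite eqxx muln1 addr0 mulrC.
by rewrite -val_eqE /= in lk; rewrite lk muln0 mulr0.
Qed.

Theorem theorem3p1 (C : numClosedFieldType) (n : nat) (a : nat -> C)
    (P : {poly C}) :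
  associated_poly n a P ->
  forall k : nat, (k <= n)%N ->
    a k = ('i ^+ n * (n`!)%:R)^-1 *
            \sum_(j < (n - k).+1)
               (-1) ^+ (n - k - j) * ('C(n.+1, n - k - j))%:R
               * P.['i * (j%:R + 2%:R^-1)]
    /\
    a k = ('i ^+ n * (n`!)%:R)^-1 *
            \sum_(j < (n - k).+1)
               (-1) ^+ (n - k - j) * ('C(n.+1, n - k - j))%:R
               * \sum_(r < n.+1) P`_r * 'i ^+ r * (j%:R + 2%:R^-1) ^+ r.
Proof.
move=> [sizeP hP] k kn.
have ak : a k = ('i ^+ n * n`!%:R)^-1 * \sum_(j < (n - k).+1)
    (-1) ^+ (n - k - j) * 'C(n.+1, n - k - j)%:R * P.['i * (j%:R + 2%:R^-1)].
  under eq_bigr => j _ do rewrite (@weyl_diagonal_identity C n a P hP) mulrCA.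
  rewrite -mulr_sumr ffact_transform_inversion // (mulrA ('i ^+ n)) mulKf //.
  by rewrite mulf_neq0 ?expf_neq0 ?neq0Ci // pnatr_eq0 -lt0n fact_gt0.
split=> //; rewrite [LHS]ak; congr (_ * _); apply: eq_bigr => j _.
rewrite (horner_coef_wide _ sizeP); congr (_ * _); apply: eq_bigr => r _.
by rewrite exprMn mulrA.
Qed.
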